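(* Let $\{(\varrho_i^k,u^k_{i-1/2})\}$ be a numerical solution of the scheme. Then for every $m=1,\dots,M$ there exist numbers $\varrho^*_{i,k}$ between $\varrho_i^{k-1}$ and $\varrho_i^k$ and $\theta^k_{i+1/2}$ between $\varrho_i^k$ and $\varrho_{i+1}^k$ such that $$\Delta x\sum_{i=0}^{N-1}\Big(\varrho_i^m\frac{|\widehat u_i^m|^2}2+\frac{p(\varrho_i^m)}{\gamma-1}\Big)+\mu\,\Delta t\,\Delta x\sum_{k=1}^m\sum_{i=0}^{N-1}|\partial_iu^k|^2+\mathcal N_1+\mathcal N_2+\mathcal N_3+\mathcal N_4=\Delta x\sum_{i=0}^{N-1}\Big(\varrho_i^0\frac{|\widehat u_i^0|^2}2+\frac{p(\varrho_i^0)}{\gamma-1}\Big),$$ where $\mathcal N_1=\frac{(\Delta t)^2\Delta x}{2(\gamma-1)}\sum_{k=1}^m\sum_{i=0}^{N-1}p''(\varrho^*_{i,k})|\partial_t^k\varrho_i|^2$, $\mathcal N_2=\frac{\Delta t(\Delta x)^2}{2(\gamma-1)}\sum_{k=1}^m\sum_{i=0}^{N-2}p''(\theta^k_{i+1/2})|\partial_{i+1/2}\varrho^k|^2|u^k_{i+1/2}|$, $\mathcal N_3=\frac{(\Delta t)^2\Delta x}{2}\sum_{k=1}^m\sum_{i=0}^{N-1}\varrho_i^{k-1}|\partial_t^k\widehat u_i|^2$, $\mathcal N_4=\frac{\Delta t(\Delta x)^2}{2}\sum_{k=1}^m\sum_{i=0}^{N-2}|\operatorname{Up}(\varrho^ku^k)_{i+1/2}|\,|\partial_{i+1/2}\widehat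 u^k|^2$. In particular all $\mathcal N_j\ge0$.
   Context: Fix $L>0$, $\mu>0$, $a>0$, $\gamma>1$, $p(\varrho)=a\varrho^\gamma$, $T>0$, integers $N,M\ge1$, $\Delta x=L/N$, $\Delta t=T/M$. Nodes $x_{i-1/2}=i\Delta x$ ($i=0,\dots,N$), cells $[x_{i-1/2},x_{i+1/2}]$ ($i=0,\dots,N-1$). Unknowns $\varrho_i^k$ ($i=0,\dots,N-1$), $u^k_{i-1/2}$ ($i=0,\dots,N$), $k=0,\dots,M$, with $u^k_{-1/2}=u^k_{N-1/2}=0$ for $k\ge1$. Notation: $z^+=\max\{z,0\}$, $z^-=\min\{z,0\}$; $\widehat u_i=\frac{u_{i-1/2}+u_{i+1/2}}2$; for $i=0,\dots,N-2$, $\operatorname{Up}(\varrho u)_{i+1/2}=\varrho_iu^+_{i+1/2}+\varrho_{i+1}u^-_{i+1/2}$, $\operatorname{Up}(\varrho\widehat uu)_{i+1/2}=\varrho_i\widehat u_iu^+_{i+1/2}+\varrho_{i+1}\widehat u_{i+1}u^-_{i+1/2}$, and both fluxes vanish at nodes $-1/2$, $N-1/2$; $\partial_{i+1/2}f=(f_{i+1}-f_i)/\Delta x$ (cell quantities), $\partial_iv=(v_{i+1/2}-v_{i-1/2})/\Delta x$ (nodal quantities), $\Delta_{i+1/2}u=(u_{i-1/2}-2u_{i+1/2}+u_{i+3/2})/\Delta x^2$, $\partial_t^kf=(f^k-f^{k-1})/\Delta t$. Initial values: $\varrho_0\in L^\gamma(0,L)$, $\varrho_0>0$, $u_0$ bounded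 on $[0,L]$; $\varrho_i^0=\frac1{\Delta x}\int_{x_{i-1/2}}^{x_{i+1/2}}\varrho_0$, $u^0_{i-1/2}=u_0(x_{i-1/2})$. The scheme, for $k=1,\dots,M$: $\partial_t^k\varrho_i+\partial_i\operatorname{Up}(\varrho^ku^k)=0$ ($i=0,\dots,N-1$) and $\partial_t^k\big(\frac{\varrho_i\widehat u_i+\varrho_{i+1}\widehat u_{i+1}}2\big)+\frac{\operatorname{Up}(\varrho^k\widehat u^ku^k)_{i+3/2}-\operatorname{Up}(\varrho^k\widehat u^ku^k)_{i-1/2}}{2\Delta x}=\mu\Delta_{i+1/2}u^k-\partial_{i+1/2}p(\varrho^k)$ ($i=0,\dots,N-2$). A numerical solution is any collection of numbers solving this system; its densities are strictly positive. *)

From HB Require Import structures.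
From mathcomp Require Import all_boot all_order all_algebra.
From mathcomp Require Import all_classical all_reals all_analysis.
Set Implicit Arguments. Unset Strict Implicit. Unset Printing Implicit Defensive.
Import Order.TTheory GRing.Theory Num.Theory.
Local Open Scope classical_set_scope.
Local Open Scope ring_scope.

(* Conventions:
   rho k i = rho_i^k          (cell i = 0..N-1, time level k = 0..M)
   u   k j = u^k_{j-1/2}      (node j = 0..N, i.e. u k (i+1) = u^k_{i+1/2}) *)

Section Defs.
Variable R : realType.

Definition posp (z : R) : R := Num.max z 0.
Definition negp (z : R) : R := Num.min z 0.

Definition pres (a gamma r : R) : R := a * r `^ gamma.
Definition pres2 (a gamma r : R) : R := a * gamma * (gamma - 1) * r `^ (gamma - 2).

Definition uhat (u : nat -> nat -> R) (k i : nat) : R := (u k i + u k i.+1) / 2.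

(* Up(rho u) at node j (j = i+1 <-> x_{i+1/2}); zero at boundary nodes 0, N *)
Definition Up_ru (N : nat) (rho u : nat -> nat -> R) (k j : nat) : R :=
  if (0 < j)%N && (j < N)%N then
    rho k j.-1 * posp (u k j) + rho k j * negp (u k j)
  else 0.

Definition Up_ruu (N : nat) (rho u : nat -> nat -> R) (k j : nat) : R :=
  if (0 < j)%N && (j < N)%N then
    rho k j.-1 * uhat u k j.-1 * posp (u k j) + rho k j * uhat u k j * negp (u k j)
  else 0.

Definition is_scheme_solution (N M : nat) (dx dt mu a gamma : R)
  (rho u : nat -> nat -> R) : Prop :=
  forall k, (1 <= k <= M)%N ->
    [/\ u k 0%N = 0, u k N = 0,
     (forall i, (i < N)%N ->
        (rho k i - rho k.-1 i) / dt + (Up_ru N rho u k i.+1 - Up_ru N rho u k i) / dx = 0)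
   & (forall i, (i.+2 <= N)%N ->
        ((rho k i * uhat u k i + rho k i.+1 * uhat u k i.+1) / 2
         - (rho k.-1 i * uhat u k.-1 i + rho k.-1 i.+1 * uhat u k.-1 i.+1) / 2) / dt
        + (Up_ruu N rho u k i.+2 - Up_ruu N rho u k i) / (2 * dx)
        = mu * (u k i - 2 * u k i.+1 + u k i.+2) / dx ^+ 2
          - (pres a gamma (rho k i.+1) - pres a gamma (rho k i)) / dx)].

Definition energy (N : nat) (dx a gamma : R) (rho u : nat -> nat -> R) (k : nat) : R :=
  dx * \sum_(0 <= i < N) (rho k i * (uhat u k i) ^+ 2 / 2 + pres a gamma (rho k i) / (gamma - 1)).

Definition between (x y z : R) : Prop := Num.min y z <= x <= Num.max y z.

End Defs.

(* Multiplying the momentum equation by u^k_{i+1/2} and the mass equation by |\widehat u^k_i|^2/2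
   gives a kinetic energy balance; multiplying the mass equation by p'(rho^k_i) gives a pressure
   energy balance.  Summation by parts (u vanishes at the boundary nodes) moves the discrete
   divergences onto u, and what is left over is exact: the implicit time stepping produces Taylor
   remainders of the convex pressure between rho^{k-1} and rho^k and squares weighted by rho^{k-1};
   the upwind fluxes produce Taylor remainders between neighbouring cells weighted by |u| (thanks
   to the Euler relation r p'(r) = gamma p(r)) and squares weighted by |Up(rho u)|.  Summing the
   one-step identity over k telescopes the energy. *)

From HB Require Import structures.
From mathcomp Require Import all_boot all_order all_algebra.
From mathcomp Require Import all_classical all_reals all_analysis measurable_realfun.
From mathcomp Require Import ring lra.
Set Implicit Arguments. Unset Strict Implicit. Unset Printing Implicit Defensive.
Import Order.TTheory GRing.Theory Num.Theory.
Local Open Scope classical_set_scope.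
Local Open Scope ring_scope.

Lemma between_sym {R : realType} (x y z : R) : between x y z -> between x z y.
Proof. by rewrite /between minC maxC. Qed.

Lemma taylor_lagrange2 {R : realType} (f f1 f2 : R -> R) (x y : R) :
  {in `[Num.min x y, Num.max x y], forall t : R, is_derive t 1 f (f1 t)} ->
  {in `[Num.min x y, Num.max x y], forall t : R, is_derive t 1 f1 (f2 t)} ->
  exists2 xi, between xi x y & f y - f x - f1 x * (y - x) = f2 xi * (y - x) ^+ 2 / 2.
Proof.
move=> df df1.
have [<-|nxy] := eqVneq x y.
  exists x; first by rewrite /between minxx maxxx lexx.
  by rewrite !subrr expr0n /= !mulr0 !mul0r subr0.
have yx0 : y - x != 0 by rewrite subr_eq0 eq_sym.
set K := (f y - f x - f1 x * (y - x)) / (y - x) ^+ 2.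
(* Rolle's theorem for G, which takes the same value at x and y *)
pose G t := f t + f1 t * (y - t) + K * (y - t) ^+ 2.
have dG : {in `[Num.min x y, Num.max x y], forall t : R,
    is_derive t 1 G ((y - t) * (f2 t - 2 * K))}.
  move=> t tin; have Df := df t tin; have Df1 := df1 t tin.
  have Dy : is_derive t 1 (fun s : R => y - s) (-1).
    by have := is_deriveB (is_derive_cst y t 1) (is_derive_id t 1); rewrite sub0r.
  have := is_deriveD (is_deriveD Df (is_deriveM Df1 Dy)) (is_deriveZ K (is_deriveX 2 Dy)).
  by congr is_derive; rewrite /GRing.scale /= expr1; field.
have Gxy : G (Num.min x y) = G (Num.max x y).
  suff : G x = G y by case: (ltgtP x y) nxy => //= _ _ ->.
  by rewrite /G subrr expr0n /= !mulr0 !addr0 /K; field.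
have lt_xy : Num.min x y < Num.max x y.
  by case: (ltgtP x y) nxy => h //= _; rewrite gt_min !lt_max ?h ?orbT.
have sub_oo t : t \in `]Num.min x y, Num.max x y[ -> t \in `[Num.min x y, Num.max x y].
  exact: subset_itv_oo_cc.
have dGd : {in `[Num.min x y, Num.max x y], forall t : R, derivable G t 1}.
  by move=> t /dG [].
have [c cin Dc] := Rolle lt_xy (fun t tin => dGd t (sub_oo t tin))
  (derivable_within_continuous dGd) Gxy.
move: (cin); rewrite in_itv /= => /andP[c1 c2].
exists c; first by rewrite /between !ltW.
have /eqP : (y - c) * (f2 c - 2 * K) = 0.
  by have := dG c (sub_oo c cin); move: Dc => /@derive_val <- /@derive_val.
rewrite mulf_eq0 !subr_eq0 => /orP[/eqP yc|/eqP ->]; last by rewrite /K; field.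
by rewrite -yc gt_min lt_max ltxx !orbF in c1 c2; move: (lt_trans c1 c2); rewrite ltxx.
Qed.

Section Pressure.
Variables (R : realType) (a g : R).

Definition dpres (r : R) : R := a * g * r `^ (g - 1).

Definition taylor_point (x y xi : R) : Prop :=
  between xi x y /\
  pres a g y - pres a g x - dpres x * (y - x) = pres2 a g xi * (y - x) ^+ 2 / 2.

Lemma is_derive_pres (r : R) : 0 < r -> is_derive r 1 (pres a g) (dpres r).
Proof.
move=> r0; rewrite /dpres -mulrA; exact: (is_deriveZ a (is_derive1_powR g r0)).
Qed.

Lemma is_derive_dpres (r : R) : 0 < r -> is_derive r 1 dpres (pres2 a g r).
Proof.
move=> r0; have := is_deriveZ (a * g) (is_derive1_powR (g - 1) r0).
by congr is_derive; rewrite /pres2 /GRing.scale /= -!mulrA; do 3 congr (_ * _);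
  congr (_ `^ _); lra.
Qed.

Lemma mul_dpres (r : R) : 0 < r -> r * dpres r = g * pres a g r.
Proof.
move=> r0; rewrite /dpres /pres mulrCA -{1}(powRr1 (ltW r0)) -mulrA -powRD;
  last by apply/implyP => _; rewrite (gt_eqF r0).
by rewrite addrC subrK mulrCA.
Qed.

Lemma pres2_ge0 (r : R) : 0 <= a -> 1 <= g -> 0 <= pres2 a g r.
Proof. by move=> a0 g1; rewrite /pres2 !mulr_ge0 ?powR_ge0 ?subr_ge0 // (le_trans ler01). Qed.

Lemma exists_taylor_point (x y : R) : 0 < x -> 0 < y -> exists xi, taylor_point x y xi.
Proof.
move=> x0 y0; have pos t : t \in `[Num.min x y, Num.max x y] -> 0 < t.
  by rewrite in_itv /= => /andP[+ _]; apply: lt_le_trans; rewrite lt_min x0.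
have [xi bt expansion] := taylor_lagrange2 (fun t tin => is_derive_pres (pos t tin))
  (fun t tin => is_derive_dpres (pos t tin)).
by exists xi.
Qed.

End Pressure.

Section Upwind.
Variable R : realType.

Variant upwind_spec (v : R) : R -> R -> R -> Prop :=
  | UpwindNonneg of 0 <= v : upwind_spec v v 0 v
  | UpwindNeg of v < 0 : upwind_spec v 0 v (- v).

Lemma upwindP (v : R) : upwind_spec v (posp v) (negp v) `|v|.
Proof.
rewrite /posp /negp; have [v0|v0] := leP 0 v.
  by rewrite ger0_norm //; constructor.
by rewrite ltr0_norm //; constructor.
Qed.

Lemma normr_upwind (r0 r1 v : R) : 0 <= r0 -> 0 <= r1 ->
  `|r0 * posp v + r1 * negp v| = r0 * posp v - r1 * negp v.
Proof.
move=> r00 r10; case: (upwindP v) => v0; rewrite !mulr0 ?addr0 ?subr0 ?add0r ?sub0r.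
  by rewrite ger0_norm ?mulr_ge0.
by rewrite ler0_norm // mulr_ge0_le0 // ltW.
Qed.

Lemma upwind_kinetic (r0 r1 v h0 h1 : R) : 0 <= r0 -> 0 <= r1 ->
  (r0 * h0 * posp v + r1 * h1 * negp v) * (h0 - h1)
  - (r0 * posp v + r1 * negp v) * (h0 ^+ 2 / 2 - h1 ^+ 2 / 2)
  = `|r0 * posp v + r1 * negp v| * (h1 - h0) ^+ 2 / 2.
Proof. by move=> r00 r10; rewrite normr_upwind //; field. Qed.

Definition upwind_point (a g r0 r1 v th : R) : Prop :=
  between th r0 r1 /\
  (r0 * posp v + r1 * negp v) * (dpres a g r0 - dpres a g r1)
  = (g - 1) * v * (pres a g r0 - pres a g r1) + `|v| * (pres2 a g th * (r1 - r0) ^+ 2 / 2).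

Lemma exists_upwind_point (a g r0 r1 v : R) : 0 < r0 -> 0 < r1 ->
  exists th, upwind_point a g r0 r1 v th.
Proof.
move=> r0p r1p; have euler w :
    w * ((r0 * dpres a g r0 - g * pres a g r0) - (r1 * dpres a g r1 - g * pres a g r1)) = 0.
  by rewrite !mul_dpres // !subrr mulr0.
rewrite /upwind_point; case: (upwindP v) => v0.
  have [th [bt T]] := exists_taylor_point a g r1p r0p; exists th; split; first exact: between_sym.
  by rewrite -[(r1 - r0) ^+ 2]sqrrN opprB -T; apply: subr0_eq; rewrite -[RHS](euler v); ring.
have [th [bt T]] := exists_taylor_point a g r0p r1p; exists th; split => //.
by rewrite -T; apply: subr0_eq; rewrite -[RHS](euler v); ring.
Qed.

End Upwind.

Section SummationByParts.
Variables (R : comPzRingType) (N : nat) (u c : nat -> R).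
Hypotheses (u0 : u 0%N = 0) (uN : u N = 0).

Lemma summation_by_parts_lin (alpha beta : R) :
  \sum_(0 <= i < N.-1) u i.+1 * (alpha * c i + beta * c i.+1) =
  \sum_(0 <= i < N) c i * (alpha * u i.+1 + beta * u i).
Proof.
case: N uN => [|n] unN /=; first by rewrite !big_geq.
under [RHS]eq_bigr do rewrite mulrDr.
rewrite big_split /= big_nat_recr //= unN !mulr0 addr0.
rewrite big_nat_recl //= u0 !mulr0 add0r -big_split /=.
by apply: eq_bigr => i _; ring.
Qed.

Lemma summation_by_parts :
  \sum_(0 <= i < N.-1) u i.+1 * (c i - c i.+1) = \sum_(0 <= i < N) c i * (u i.+1 - u i).
Proof.
have := summation_by_parts_lin 1 (-1).
by under eq_bigr do rewrite mul1r mulN1r; under [in RHS]eq_bigr do rewrite mul1r mulN1r.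
Qed.

Lemma summation_by_parts_add :
  \sum_(0 <= i < N.-1) u i.+1 * (c i + c i.+1) = \sum_(0 <= i < N) c i * (u i.+1 + u i).
Proof.
have := summation_by_parts_lin 1 1.
by under eq_bigr do rewrite !mul1r; under [in RHS]eq_bigr do rewrite !mul1r.
Qed.

End SummationByParts.

Lemma choice2 {I J T : Type} (x0 : T) (P : I -> J -> Prop) (Q : I -> J -> T -> Prop) :
  (forall k i, P k i -> exists x, Q k i x) ->
  exists f : I -> J -> T, forall k i, P k i -> Q k i (f k i).
Proof.
move=> PQ; have /choice[f Hf] : forall p : I * J, exists x, P p.1 p.2 -> Q p.1 p.2 x.
  move=> [k i] /=; have [/PQ[x Qx]|nP] := pselect (P k i); first by exists x.
  by exists x0 => /nP.
by exists (fun k i => f (k, i)) => k i /(Hf (k, i)).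
Qed.

Definition step_dissipation {R : realType} (N : nat) (dx dt mu a g : R)
    (rho u rs th : nat -> nat -> R) (k : nat) : R :=
  mu * dt * dx * \sum_(0 <= i < N) ((u k i.+1 - u k i) / dx) ^+ 2
  + dt ^+ 2 * dx / (2 * (g - 1)) *
      \sum_(0 <= i < N) pres2 a g (rs k i) * ((rho k i - rho k.-1 i) / dt) ^+ 2
  + dt * dx ^+ 2 / (2 * (g - 1)) *
      \sum_(0 <= i < N.-1) pres2 a g (th k i) * ((rho k i.+1 - rho k i) / dx) ^+ 2 * `|u k i.+1|
  + dt ^+ 2 * dx / 2 * \sum_(0 <= i < N) rho k.-1 i * ((uhat u k i - uhat u k.-1 i) / dt) ^+ 2
  + dt * dx ^+ 2 / 2 *
      \sum_(0 <= i < N.-1) `|Up_ru N rho u k i.+1| * ((uhat u k i.+1 - uhat u k i) / dx) ^+ 2.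

Section EnergyStep.
Variables (R : realType) (N : nat) (dx dt mu a g : R) (rho u : nat -> nat -> R) (k : nat).
Variables (rs th : nat -> nat -> R).
Hypotheses (dx_gt0 : 0 < dx) (dt_gt0 : 0 < dt) (g_gt1 : 1 < g).
Hypotheses (u_left : u k 0%N = 0) (u_right : u k N = 0).
Hypothesis mass : forall i, (i < N)%N ->
  (rho k i - rho k.-1 i) / dt + (Up_ru N rho u k i.+1 - Up_ru N rho u k i) / dx = 0.
Hypothesis momentum : forall i, (i.+2 <= N)%N ->
  ((rho k i * uhat u k i + rho k i.+1 * uhat u k i.+1) / 2
   - (rho k.-1 i * uhat u k.-1 i + rho k.-1 i.+1 * uhat u k.-1 i.+1) / 2) / dt
  + (Up_ruu N rho u k i.+2 - Up_ruu N rho u k i) / (2 * dx)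
  = mu * (u k i - 2 * u k i.+1 + u k i.+2) / dx ^+ 2
    - (pres a g (rho k i.+1) - pres a g (rho k i)) / dx.
Hypothesis rho_ge0 : forall i, (i < N)%N -> 0 <= rho k i.
Hypothesis taylor_time : forall i, (i < N)%N ->
  taylor_point a g (rho k i) (rho k.-1 i) (rs k i).
Hypothesis upwind_space : forall i, (i.+2 <= N)%N ->
  upwind_point a g (rho k i) (rho k i.+1) (u k i.+1) (th k i).

Local Notation r i := (rho k i).
Local Notation r' i := (rho k.-1 i).
Local Notation h i := (uhat u k i).
Local Notation h' i := (uhat u k.-1 i).
Local Notation v j := (u k j).
Local Notation F j := (Up_ru N rho u k j).
Local Notation G j := (Up_ruu N rho u k j).
Local Notation P i := (pres a g (rho k i)).
Local Notation P' i := (pres a g (rho k.-1 i)).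

Let dx_neq0 : dx != 0. Proof. exact: lt0r_neq0. Qed.
Let dt_neq0 : dt != 0. Proof. exact: lt0r_neq0. Qed.

Let F_left : F 0%N = 0. Proof. by rewrite /Up_ru ltnn. Qed.
Let F_right : F N = 0. Proof. by rewrite /Up_ru ltnn andbF. Qed.
Let G_left : G 0%N = 0. Proof. by rewrite /Up_ruu ltnn. Qed.
Let G_right : G N = 0. Proof. by rewrite /Up_ruu ltnn andbF. Qed.

Let inner_node i : (i < N.-1)%N -> (i.+2 <= N)%N.
Proof. by case: N. Qed.

Let mass_cleared i : (i < N)%N -> (r i - r' i) * dx + dt * (F i.+1 - F i) = 0.
Proof. by move=> iN; rewrite -(mul0r (dt * dx)) -(mass iN); field; rewrite ?dt_neq0 ?dx_neq0. Qed.

(* momentum increment and stress of cell [i], both multiplied by [dt * dx] *)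
Let b i := (r i * h i - r' i * h' i) * dx + dt * (G i.+1 - G i).
Let e i := mu * dt / dx * (v i - v i.+1) + dt * P i.

Let momentum_cleared i : (i.+2 <= N)%N -> b i / 2 + b i.+1 / 2 = e i - e i.+1.
Proof.
move=> iN; have := congr1 (fun z => z * (dt * dx)) (momentum iN).
by rewrite /b /e => E; apply: etrans (etrans _ E) _; field; rewrite ?dt_neq0 ?dx_neq0.
Qed.

Let kinetic_cell i : (i < N)%N -> b i * h i =
  dx * (r i * h i ^+ 2 / 2 - r' i * h' i ^+ 2 / 2 + r' i * (h i - h' i) ^+ 2 / 2)
  + dt * (h i * (G i.+1 - G i) - h i ^+ 2 / 2 * (F i.+1 - F i)).
Proof.
move=> iN; apply: subr0_eq; rewrite -(mulr0 (h i ^+ 2 / 2)) -(mass_cleared iN) /b.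
by field.
Qed.

Let kinetic_balance :
  \sum_(0 <= i < N) (dx * (r i * h i ^+ 2 / 2 - r' i * h' i ^+ 2 / 2 + r' i * (h i - h' i) ^+ 2 / 2)
    + dt * (h i * (G i.+1 - G i) - h i ^+ 2 / 2 * (F i.+1 - F i)))
  = \sum_(0 <= i < N) e i * (v i.+1 - v i).
Proof.
transitivity (\sum_(0 <= i < N) b i / 2 * (v i.+1 + v i)).
  by apply: eq_big_nat => i /andP[_ iN]; rewrite -kinetic_cell // /uhat; field.
rewrite -summation_by_parts_add // -summation_by_parts //.
by apply: eq_big_nat => i /andP[_ /inner_node iN]; rewrite momentum_cleared.
Qed.

Let kinetic_flux :
  \sum_(0 <= i < N) (h i * (G i.+1 - G i) - h i ^+ 2 / 2 * (F i.+1 - F i))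
  = \sum_(0 <= i < N.-1) `|F i.+1| * (h i.+1 - h i) ^+ 2 / 2.
Proof.
rewrite sumrB -(summation_by_parts _ G_left G_right).
rewrite -(summation_by_parts (fun i => h i ^+ 2 / 2) F_left F_right) -sumrB.
apply: eq_big_nat => i /andP[_ /inner_node iN].
by rewrite /Up_ru /Up_ruu /= iN -upwind_kinetic ?rho_ge0 ?(ltnW iN) //; field.
Qed.

Let pressure_time :
  dx * \sum_(0 <= i < N) (P i - P' i + pres2 a g (rs k i) * (r' i - r i) ^+ 2 / 2)
  + dt * \sum_(0 <= i < N) dpres a g (r i) * (F i.+1 - F i) = 0.
Proof.
rewrite !mulr_sumr -big_split /= big_nat_cond big1 // => i /andP[/andP[_ iN] _].
rewrite -(taylor_time iN).2 -(mulr0 (dpres a g (r i))) -(mass_cleared iN); ring.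
Qed.

Let pressure_flux : \sum_(0 <= i < N) dpres a g (r i) * (F i.+1 - F i)
  = (g - 1) * \sum_(0 <= i < N) P i * (v i.+1 - v i)
    + \sum_(0 <= i < N.-1) `|v i.+1| * (pres2 a g (th k i) * (r i.+1 - r i) ^+ 2 / 2).
Proof.
rewrite -(summation_by_parts _ F_left F_right) -(summation_by_parts _ u_left u_right).
rewrite mulr_sumr -big_split /=; apply: eq_big_nat => i /andP[_ /inner_node iN].
by rewrite /Up_ru /= iN (upwind_space iN).2; ring.
Qed.

Let K l := \sum_(0 <= i < N) rho l i * uhat u l i ^+ 2 / 2.
Let Pr l := \sum_(0 <= i < N) pres a g (rho l i).
Let S1 := \sum_(0 <= i < N) pres2 a g (rs k i) * (r' i - r i) ^+ 2 / 2.
Let S2 := \sum_(0 <= i < N.-1) `|v i.+1| * (pres2 a g (th k i) * (r i.+1 - r i) ^+ 2 / 2).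
Let S3 := \sum_(0 <= i < N) r' i * (h i - h' i) ^+ 2 / 2.
Let S4 := \sum_(0 <= i < N.-1) `|F i.+1| * (h i.+1 - h i) ^+ 2 / 2.
Let V := \sum_(0 <= i < N) (v i.+1 - v i) ^+ 2.
Let W := \sum_(0 <= i < N) P i * (v i.+1 - v i).

Let kinetic_energy : dx * (K k - K k.-1 + S3) + dt * S4 = - (mu * dt / dx) * V + dt * W.
Proof.
rewrite /K /S3 /S4 -kinetic_flux -sumrB -big_split /= !mulr_sumr -big_split /=.
rewrite kinetic_balance -big_split /=.
by apply: eq_bigr => i _; rewrite /e; ring.
Qed.

Let pressure_energy : dx * (Pr k - Pr k.-1 + S1) + dt * ((g - 1) * W + S2) = 0.
Proof. by rewrite /Pr /S1 -sumrB -big_split -pressure_flux pressure_time. Qed.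

Let g1_neq0 : g - 1 != 0. Proof. by rewrite subr_eq0 gt_eqF. Qed.

Let energyE l : energy N dx a g rho u l = dx * (K l + Pr l / (g - 1)).
Proof. by rewrite /energy big_split /= mulr_suml. Qed.

Let step_dissipationE : step_dissipation N dx dt mu a g rho u rs th k
  = mu * dt / dx * V + dx / (g - 1) * S1 + dt / (g - 1) * S2 + dx * S3 + dt * S4.
Proof.
rewrite /step_dissipation !mulr_sumr.
by congr (_ + _ + _ + _ + _); apply: eq_bigr => i _; field; rewrite ?g1_neq0 ?dx_neq0 ?dt_neq0.
Qed.

Lemma energy_step : energy N dx a g rho u k + step_dissipation N dx dt mu a g rho u rs th k
  = energy N dx a g rho u k.-1.
Proof.
rewrite !energyE step_dissipationE; apply: subr0_eq; transitivity
  ((dx * (K k - K k.-1 + S3) + dt * S4 - (- (mu * dt / dx) * V + dt * W))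
   + (dx * (Pr k - Pr k.-1 + S1) + dt * ((g - 1) * W + S2)) / (g - 1)).
  by field; rewrite ?g1_neq0 ?dx_neq0 ?dt_neq0.
by rewrite kinetic_energy pressure_energy subrr mul0r addr0.
Qed.

End EnergyStep.

Section SchemeEnergy.
Variables (R : realType) (N M : nat) (dx dt mu a g : R) (rho u : nat -> nat -> R).
Hypothesis rho_gt0 : forall k i, (k <= M)%N -> (i < N)%N -> 0 < rho k i.

Let rho_prev_gt0 k i : (k <= M)%N -> (i < N)%N -> 0 < rho k.-1 i.
Proof. by move=> kM; apply: rho_gt0; exact: leq_trans (leq_pred k) kM. Qed.

Lemma exists_taylor_points : exists rs : nat -> nat -> R, forall k i,
  (1 <= k <= M)%N /\ (i < N)%N -> taylor_point a g (rho k i) (rho k.-1 i) (rs k i).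
Proof.
apply: (choice2 0 (Q := fun k i => taylor_point a g (rho k i) (rho k.-1 i))).
move=> k i [/andP[_ kM] iN]; exact: exists_taylor_point (rho_gt0 kM iN) (rho_prev_gt0 kM iN).
Qed.

Lemma exists_upwind_points : exists th : nat -> nat -> R, forall k i,
  (1 <= k <= M)%N /\ (i.+2 <= N)%N -> upwind_point a g (rho k i) (rho k i.+1) (u k i.+1) (th k i).
Proof.
apply: (choice2 0 (Q := fun k i => upwind_point a g (rho k i) (rho k i.+1) (u k i.+1))).
move=> k i [/andP[_ kM] iN]; exact: exists_upwind_point (rho_gt0 kM (ltnW iN)) (rho_gt0 kM iN).
Qed.

Hypotheses (dx_gt0 : 0 < dx) (dt_gt0 : 0 < dt) (g_gt1 : 1 < g).
Hypothesis scheme : is_scheme_solution N M dx dt mu a g rho u.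

Lemma energy_balance (rs th : nat -> nat -> R) (m : nat) :
  (forall k i, (1 <= k <= M)%N /\ (i < N)%N -> taylor_point a g (rho k i) (rho k.-1 i) (rs k i)) ->
  (forall k i, (1 <= k <= M)%N /\ (i.+2 <= N)%N ->
     upwind_point a g (rho k i) (rho k i.+1) (u k i.+1) (th k i)) ->
  (m <= M)%N ->
  energy N dx a g rho u m + \sum_(1 <= k < m.+1) step_dissipation N dx dt mu a g rho u rs th k
  = energy N dx a g rho u 0%N.
Proof.
move=> rsP thP mM.
rewrite (@telescope_sumr_eq _ 1 m.+1 (fun j => - energy N dx a g rho u j.-1)) //=.
  by rewrite opprK addNKr.
move=> k /andP[k1 km]; have k_in : (1 <= k <= M)%N by rewrite k1 (leq_trans _ mM) // -ltnS.
have [u_left u_right mass momentum] := scheme k_in.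
rewrite -(energy_step (rs := rs) (th := th) dx_gt0 dt_gt0 g_gt1 u_left u_right mass momentum)
  ?opprK ?addKr //.
- by move=> i iN; rewrite ltW // rho_gt0 //; case/andP: k_in.
- by move=> i iN; apply: rsP.
- by move=> i iN; apply: thP.
Qed.

End SchemeEnergy.

Lemma le_add1_powR {R : realType} (g x : R) : 1 <= g -> 0 <= x -> x <= 1 + x `^ g.
Proof.
move=> g1 x0; have [x1|x1] := leP x 1; first by rewrite -[leLHS]addr0 lerD // powR_ge0.
apply: (@le_trans _ _ (x `^ g)); last by rewrite lerDr.
by rewrite -{1}(powRr1 x0) ler_powR // ltW.
Qed.

Section Integrals.
Local Open Scope ereal_scope.
Context {d} {T : measurableType d} {R : realType} (mu : {measure set T -> \bar R}).

Lemma integrable_of_powR (D : set T) (f : T -> R) (g : R) :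
  measurable D -> mu D < +oo -> (1 <= g)%R -> measurable_fun D f ->
  \int[mu]_(x in D) (`|f x| `^ g)%:E < +oo -> mu.-integrable D (EFin \o f).
Proof.
move=> mD muD g1 mf fin.
have mpow : measurable_fun D (fun x => (`|f x| `^ g)%:E).
  apply/measurable_EFinP; apply: (measurableT_comp (measurable_powR g)).
  exact: measurableT_comp mf.
apply: (@le_integrable _ _ _ mu D mD _ (fun x => 1%:E + (`|f x| `^ g)%:E)).
- exact/measurable_EFinP.
- move=> x _ /=; rewrite lee_fin.
  exact: le_trans (le_add1_powR g1 (normr_ge0 _)) (ler_norm _).
apply: integrableD => //; apply/integrableP; split => //.
- by under eq_integral do rewrite gee0_abs //; rewrite integral_cst // mul1e.
- by under eq_integral do rewrite gee0_abs ?lee_fin ?powR_ge0 //.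
Qed.

Lemma Rintegral_gt0 (D : set T) (f : T -> R) :
  measurable D -> 0 < mu D -> mu.-integrable D (EFin \o f) ->
  (forall x, D x -> 0 < f x)%R -> (0 < Rintegral mu D f)%R.
Proof.
move=> mD muD /integrableP[mf fin] fpos.
have absE : \int[mu]_(x in D) `|(EFin \o f) x| = \int[mu]_(x in D) (f x)%:E.
  by apply: eq_integral => x /set_mem xD; rewrite gee0_abs // lee_fin ltW // fpos.
rewrite absE in fin; apply: fine_gt0; rewrite fin andbT lt0e.
rewrite integral_ge0 ?andbT; last by move=> x xD; rewrite lee_fin ltW // fpos.
apply/eqP => I0; rewrite -absE in I0.
have [Z [mZ Z0 DZ]] := (ae_eq_integral_abs mu mD mf).1 I0.
suff : mu D = 0 by move=> muD0; rewrite muD0 ltxx in muD.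
apply: (subset_measure0 mD mZ _ Z0) => x Dx; apply: DZ => /(_ Dx) /eqP.
by rewrite eqe gt_eqF // fpos.
Qed.

End Integrals.

Lemma Rintegral_itv_gt0 {R : realType} (f : R -> R) (L g c d : R) :
  1 <= g -> 0 <= c -> c < d -> d <= L -> measurable_fun `]0, L[ f ->
  (\int[lebesgue_measure]_(x in `]0%R, L[) (`|f x| `^ g)%:E < +oo)%E ->
  (forall x, 0 < x < L -> 0 < f x) ->
  0 < Rintegral lebesgue_measure `[c, d] f.
Proof.
move=> g1 c0 cd dL mf fin fpos.
have cdL : `]c, d[ `<=` `]0, L[.
  move=> x /=; rewrite !in_itv /= => /andP[cx xd].
  by rewrite (le_lt_trans c0 cx) (lt_le_trans xd dL).
have int0L : lebesgue_measure.-integrable `]0, L[ (EFin \o f).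
  apply: integrable_of_powR fin => //.
  have L0 : 0 < L by apply: le_lt_trans c0 (lt_le_trans cd dL).
  by have := lebesgue_measure_itv (R := R) `]0, L[; rewrite /= lte_fin L0 => ->; rewrite -EFinD ltry.
have intcd : lebesgue_measure.-integrable `]c, d[ (EFin \o f).
  by apply: integrableS int0L => //; exact: measurable_itv.
rewrite /Rintegral integral_itv_bndoo; last by case/integrableP: intcd.
apply: Rintegral_gt0 intcd _ => //.
- by have := lebesgue_measure_itv (R := R) `]c, d[; rewrite /= lte_fin cd => ->;
    rewrite -EFinD lte_fin subr_gt0.
- by move=> x /cdL; rewrite /= in_itv; apply: fpos.
Qed.

Lemma mulr_sum2_ge0 {R : numDomainType} (c : R) (m n : nat) (F : nat -> nat -> R) :
  0 <= c -> (forall k i, (1 <= k <= m)%N -> (i < n)%N -> 0 <= F k i) ->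
  0 <= c * \sum_(1 <= k < m.+1) \sum_(0 <= i < n) F k i.
Proof.
move=> c0 F0; rewrite mulr_ge0 // big_nat_cond sumr_ge0 // => k /andP[k_in _].
by rewrite big_nat_cond sumr_ge0 // => i /andP[/andP[_ iN] _]; apply: F0.
Qed.

Lemma cell_average_gt0 {R : realType} (f : R -> R) (L g dx : R) (N i : nat) :
  1 <= g -> 0 < dx -> N%:R * dx <= L -> (i < N)%N -> measurable_fun `]0, L[ f ->
  (\int[lebesgue_measure]_(x in `]0%R, L[) (`|f x| `^ g)%:E < +oo)%E ->
  (forall x, 0 < x < L -> 0 < f x) ->
  0 < dx^-1 * Rintegral lebesgue_measure `[i%:R * dx, i.+1%:R * dx] f.
Proof.
move=> g1 dx0 NL iN mf fin fpos.
rewrite mulr_gt0 ?invr_gt0 //; apply: Rintegral_itv_gt0 mf fin fpos => //.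
- by rewrite mulr_ge0 // ltW.
- by rewrite ltr_pM2r // ltr_nat.
- by apply: le_trans NL; rewrite ler_pM2r // ler_nat.
Qed.

Theorem proposition3p3 (R : realType) (L mu a gamma T : R) (N M : nat)
  (rho0 u0 : R -> R) (rho u : nat -> nat -> R) :
  0 < L -> 0 < mu -> 0 < a -> 1 < gamma -> 0 < T -> (1 <= N)%N -> (1 <= M)%N ->
  let dx := L / N%:R in
  let dt := T / M%:R in
  measurable_fun `]0, L[ rho0 ->
  (\int[lebesgue_measure]_(x in `]0%R, L[) (`|rho0 x| `^ gamma)%:E < +oo)%E ->
  (forall x, 0 < x < L -> 0 < rho0 x) ->
  (exists B : R, forall x, 0 <= x <= L -> `|u0 x| <= B) ->
  (forall i, (i < N)%N ->
     rho 0%N i = dx^-1 * Rintegral lebesgue_measure `[i%:R * dx, i.+1%:R * dx] rho0) ->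
  (forall i, (i <= N)%N -> u 0%N i = u0 (i%:R * dx)) ->
  is_scheme_solution N M dx dt mu a gamma rho u ->
  (forall k i, (1 <= k <= M)%N -> (i < N)%N -> 0 < rho k i) ->
  forall m, (1 <= m <= M)%N ->
  exists (rs th : nat -> nat -> R),
    (forall k i, (1 <= k <= m)%N -> (i < N)%N -> between (rs k i) (rho k.-1 i) (rho k i)) /\
    (forall k i, (1 <= k <= m)%N -> (i.+2 <= N)%N -> between (th k i) (rho k i) (rho k i.+1)) /\
    let N1 := dt ^+ 2 * dx / (2 * (gamma - 1)) *
      \sum_(1 <= k < m.+1) \sum_(0 <= i < N)
         pres2 a gamma (rs k i) * ((rho k i - rho k.-1 i) / dt) ^+ 2 in
    let N2 := dt * dx ^+ 2 / (2 * (gamma - 1)) *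
      \sum_(1 <= k < m.+1) \sum_(0 <= i < N.-1)
         pres2 a gamma (th k i) * ((rho k i.+1 - rho k i) / dx) ^+ 2 * `|u k i.+1| in
    let N3 := dt ^+ 2 * dx / 2 *
      \sum_(1 <= k < m.+1) \sum_(0 <= i < N)
         rho k.-1 i * ((uhat u k i - uhat u k.-1 i) / dt) ^+ 2 in
    let N4 := dt * dx ^+ 2 / 2 *
      \sum_(1 <= k < m.+1) \sum_(0 <= i < N.-1)
         `|Up_ru N rho u k i.+1| * ((uhat u k i.+1 - uhat u k i) / dx) ^+ 2 in
    [/\ energy N dx a gamma rho u m
        + mu * dt * dx * \sum_(1 <= k < m.+1) \sum_(0 <= i < N) ((u k i.+1 - u k i) / dx) ^+ 2
        + N1 + N2 + N3 + N4
        = energy N dx a gamma rho u 0%N,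
      0 <= N1, 0 <= N2, 0 <= N3 & 0 <= N4].
Proof.
move=> L0 _ a0 g1 T0 N_gt0 M_gt0 dx dt mrho0 Lg_rho0 rho0_pos _ rho_init _ scheme rho_pos m.
case/andP=> _ mM; have [dx0 dt0] : 0 < dx /\ 0 < dt by rewrite !divr_gt0 ?ltr0n.
have rho_gt0 k i : (k <= M)%N -> (i < N)%N -> 0 < rho k i.
  case: k => [_ iN|k kM iN]; last exact: rho_pos.
  rewrite rho_init //; apply: cell_average_gt0 (ltW g1) dx0 _ iN mrho0 Lg_rho0 rho0_pos.
  by rewrite /dx mulrC divfK // lt0r_neq0 // ltr0n.
clearbody dx dt.
have [rs rsP] := exists_taylor_points a gamma rho_gt0.
have [th thP] := exists_upwind_points a gamma u rho_gt0.
have kM k : (1 <= k <= m)%N -> (1 <= k <= M)%N by case/andP=> -> /leq_trans; apply.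
exists rs, th; split => [k i /kM k_in iN|]; first exact/between_sym/(rsP k i (conj k_in iN)).1.
split => [k i /kM k_in iN|]; first exact: (thP k i (conj k_in iN)).1.
have [dx_ge0 dt_ge0 g1_ge0] : [/\ 0 <= dx, 0 <= dt & 0 <= gamma - 1].
  by rewrite !ltW // subr_gt0.
have p2_ge0 x : 0 <= pres2 a gamma x by rewrite pres2_ge0 ?ltW.
move=> N1 N2 N3 N4; split.
- rewrite -(energy_balance rho_gt0 dx0 dt0 g1 scheme rsP thP mM).
  by rewrite /N1 /N2 /N3 /N4 /step_dissipation !big_split /= -!mulr_sumr; ring.
- apply: mulr_sum2_ge0 => [|k i _ _]; first by rewrite divr_ge0 ?mulr_ge0 ?exprn_ge0 ?ler0n.
  exact: mulr_ge0 (p2_ge0 _) (sqr_ge0 _).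
- apply: mulr_sum2_ge0 => [|k i _ _]; first by rewrite divr_ge0 ?mulr_ge0 ?exprn_ge0 ?ler0n.
  exact: mulr_ge0 (mulr_ge0 (p2_ge0 _) (sqr_ge0 _)) (normr_ge0 _).
- apply: mulr_sum2_ge0 => [|k i /kM/andP[_ kM'] iN]; first by rewrite divr_ge0 ?mulr_ge0 ?ler0n.
  exact: mulr_ge0 (ltW (rho_gt0 _ _ (leq_trans (leq_pred k) kM') iN)) (sqr_ge0 _).
- apply: mulr_sum2_ge0 => [|k i _ _]; first by rewrite divr_ge0 ?mulr_ge0 ?exprn_ge0 ?ler0n.
  exact: mulr_ge0 (normr_ge0 _) (sqr_ge0 _).
Qed.
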